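(* In the setting described in the context, let $(W^1,W^2)$ be a minimal pair of allocation states and suppose $y\in\mathcal X$ satisfies $W^1_y<\beta_y$. Then $W^1_{xy}=W^2_{xy}$ for all $x\in\mathcal X$.
   Context: $\mathcal X$ is a finite set of units, $\mathcal G=(\mathcal X,\mathcal E)$ a directed graph, $N_x=\{y:(x,y)\in\mathcal E\}$, $\alpha_x,\beta_x$ non-negative integers. An allocation state is a matrix $W\in\mathbb N^{\mathcal X\times\mathcal X}$ with $W_{xy}=0$ whenever $(x,y)\notin\mathcal E$, $W^x:=\sum_yW_{xy}=\alpha_x$ for all $x$, and $W_y:=\sum_xW_{xy}\le\beta_y$ for all $y$; $\mathcal W$ is the set of allocation states and $e_{xy}$ the matrix unit. Let $\mathcal L$ be the graph on $\mathcal W$ in which $W$ and $W'$ are adjacent iff $W'=W-e_{xy}+e_{xy'}$ for some $x$ and some $y\ne y'$ with $W_{xy}>0$, $y'\in N_x$, $W_{y'}<\beta_{y'}$ (these are exactly the positive-rate transitions of the paper's noisy best-response storage dynamics restricted to $\mathcal W$, under its standing assumption that unit activation rates are $\nu_x=\nu\alpha_x$ with $\nu>0$). Write $W\sim W'$ if $W,W'$ are connected by a path in $\mathcal L$. Let $\delta(W^1,W^2)=\sum_{x,y}|W^1_{xy}-W^2_{xy}|$. A pair $(W^1,W^2)$ in $\mathcal W$ is minimal if $\delta(W^1,W^2)\le\delta(W^{1'},W^{2'})$ for all $W^{1'}\sim W^1$ and all $W^{2'}\sim W^2$. *)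

From mathcomp Require Import all_boot.
From Stdlib Require Import Relations.
Set Implicit Arguments. Unset Strict Implicit. Unset Printing Implicit Defensive.

(* Units X : finType; graph given by edge relation E : rel X (E x y <-> (x,y) in edges).
   Allocation matrices W : X -> X -> nat given as finite functions on X * X. *)
Definition mat (X : finType) := {ffun X * X -> nat}.

Section Alloc.
Variables (X : finType) (E : rel X) (alpha beta : X -> nat).

Definition rowsum (W : mat X) (x : X) : nat := \sum_(y : X) W (x, y).
Definition colsum (W : mat X) (y : X) : nat := \sum_(x : X) W (x, y).

Definition alloc_state (W : mat X) : Prop :=
  (forall x y, ~~ E x y -> W (x, y) = 0) /\
  (forall x, rowsum W x = alpha x) /\
  (forall y, colsum W y <= beta y).

Definition move (W W' : mat X) : Prop :=
  exists x y y', [/\ y != y', 0 < W (x, y), E x y', colsum W y' < beta y' &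
    forall a b, W' (a, b) =
      (W (a, b) - ((a == x) && (b == y)) + ((a == x) && (b == y')))%N].

Definition L_adj (W W' : mat X) : Prop :=
  alloc_state W /\ alloc_state W' /\ (move W W' \/ move W' W).

Definition L_conn : relation (mat X) := clos_refl_trans (mat X) L_adj.

Definition delta (W1 W2 : mat X) : nat :=
  \sum_(p : X * X) (W1 p - W2 p + (W2 p - W1 p))%N.

Definition minimal_pair (W1 W2 : mat X) : Prop :=
  alloc_state W1 /\ alloc_state W2 /\
  forall W1' W2', L_conn W1 W1' -> L_conn W2 W2' ->
    delta W1 W2 <= delta W1' W2'.
End Alloc.

From mathcomp Require Import all_boot.
From mathcomp Require Import zify.
From Stdlib Require Import Relations.
Set Implicit Arguments. Unset Strict Implicit. Unset Printing Implicit Defensive.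

(* If W2 had more units than W1 at some (z, y), the equal row sums give a y'
   with W1 (z, y') > W2 (z, y'); since y has spare capacity in W1, moving one
   unit of z from y' to y is a step of L that brings W1 two units closer to W2,
   contradicting minimality. Hence W2 <= W1 on column y, so y also has spare
   capacity in W2, and the symmetric argument gives W1 <= W2 there. *)

Lemma sum_indicator1 (T : finType) (q : T) : \sum_(p : T) ((p == q) : nat) = 1.
Proof. by rewrite (bigD1 q) //= eqxx big1 ?addn0 // => p /negbTE ->. Qed.

Lemma exists_gtn_of_sum_eq (T : finType) (f g : T -> nat) (c : T) :
  \sum_i f i = \sum_i g i -> f c < g c -> exists d, g d < f d.
Proof.
move=> eq_sum lt_c; apply/existsP; apply: contraLR lt_c.
rewrite negb_exists => /forallP le_gf; rewrite -leqNgt.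
have le_fg i : f i <= g i by rewrite leqNgt le_gf.
have : \sum_(i | i != c) f i <= \sum_(i | i != c) g i by apply: leq_sum.
by rewrite (bigD1 c) // [in RHS](bigD1 c) //= in eq_sum; lia.
Qed.

Section Shift.
Variables (X : finType) (E : rel X) (alpha beta : X -> nat).

Definition shift (W : mat X) (x y y' : X) : mat X :=
  [ffun p => W p - (p == (x, y)) + (p == (x, y'))].

Lemma shiftE (W : mat X) (x y y' : X) (p : X * X) : 0 < W (x, y) ->
  shift W x y y' p + (p == (x, y)) = W p + (p == (x, y')).
Proof.
move=> Wxy; rewrite ffunE.
by case: (eqVneq p (x, y)) => [->|_]; case: (_ == (x, y')); rewrite /=; lia.
Qed.

Lemma sum_row_indicator (a x c : X) : \sum_b (((a, b) == (x, c)) : nat) = (a == x).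
Proof.
under eq_bigr do rewrite xpair_eqE.
by case: (a == x); rewrite ?sum_indicator1 // big1.
Qed.

Lemma sum_col_indicator (b x c : X) : \sum_a (((a, b) == (x, c)) : nat) = (b == c).
Proof.
under eq_bigr do rewrite xpair_eqE andbC.
by case: (b == c); rewrite ?sum_indicator1 // big1.
Qed.

Lemma rowsum_shift (W : mat X) (x y y' a : X) : 0 < W (x, y) ->
  rowsum (shift W x y y') a = rowsum W a.
Proof.
move=> Wxy; have : \sum_b (shift W x y y' (a, b) + ((a, b) == (x, y)))
                 = \sum_b (W (a, b) + ((a, b) == (x, y'))).
  by apply: eq_bigr => b _; apply: shiftE.
by rewrite !big_split /= !sum_row_indicator => /addIn.
Qed.

Lemma colsum_shift (W : mat X) (x y y' b : X) : 0 < W (x, y) ->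
  colsum (shift W x y y') b + (b == y) = colsum W b + (b == y').
Proof.
move=> Wxy; have : \sum_a (shift W x y y' (a, b) + ((a, b) == (x, y)))
                 = \sum_a (W (a, b) + ((a, b) == (x, y'))).
  by apply: eq_bigr => a _; apply: shiftE.
by rewrite !big_split /= !sum_col_indicator.
Qed.

Lemma L_adj_shift (W : mat X) (x y y' : X) :
  alloc_state E alpha beta W -> y != y' -> 0 < W (x, y) -> E x y' ->
  colsum W y' < beta y' -> L_adj E alpha beta W (shift W x y y').
Proof.
move=> [W_E [W_row W_col]] ne_yy' Wxy Exy' cap_y'.
have shift_E a b : ~~ E a b -> shift W x y y' (a, b) = 0.
  move=> nEab; rewrite ffunE W_E // sub0n add0n xpair_eqE.
  by apply/eqP; rewrite eqb0; apply: contra nEab => /andP[/eqP-> /eqP->].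
have shift_col b : colsum (shift W x y y') b <= beta b.
  have := colsum_shift y' b Wxy; have := W_col b.
  by case: (eqVneq b y') => [->|_]; rewrite ?(negbTE ne_yy') /=; lia.
split=> //; split; last by left; exists x, y, y'; split=> // a b; rewrite ffunE xpair_eqE.
by split=> //; split=> // a; rewrite rowsum_shift.
Qed.

Lemma delta_sym (A B : mat X) : delta A B = delta B A.
Proof. by apply: eq_bigr => p _; rewrite addnC. Qed.

Lemma delta_shift (W V : mat X) (x y y' : X) :
  V (x, y) < W (x, y) -> W (x, y') < V (x, y') ->
  delta (shift W x y y') V + 2 = delta W V.
Proof.
move=> lt_y lt_y'; have ne_yy' : y != y' by apply: contraTneq lt_y => ->; lia.
have : \sum_p (shift W x y y' p - V p + (V p - shift W x y y' p)
               + (p == (x, y)) + (p == (x, y')))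
     = \sum_p (W p - V p + (V p - W p)).
  apply: eq_bigr => p _; rewrite ffunE.
  case: (eqVneq p (x, y)) => [->|_]; first by rewrite xpair_eqE eqxx (negbTE ne_yy') /=; lia.
  by case: (eqVneq p (x, y')) => [->|_] /=; lia.
by rewrite /delta !big_split /= !sum_indicator1; lia.
Qed.

Lemma minimal_pair_sym (W1 W2 : mat X) :
  minimal_pair E alpha beta W1 W2 -> minimal_pair E alpha beta W2 W1.
Proof.
move=> [A1 [A2 min12]]; split; first exact: A2; split; first exact: A1.
move=> W2' W1' conn2 conn1.
by rewrite delta_sym (delta_sym W2'); apply: min12.
Qed.

Lemma minimal_pair_column_le (W1 W2 : mat X) (y : X) :
  minimal_pair E alpha beta W1 W2 -> colsum W1 y < beta y ->
  forall z, W2 (z, y) <= W1 (z, y).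
Proof.
move=> [A1 [A2 min12]] cap_y z; rewrite leqNgt; apply/negP => lt_zy.
have [y' lt_zy'] : exists y', W2 (z, y') < W1 (z, y').
  by apply: (exists_gtn_of_sum_eq (f := fun b => W1 (z, b))) lt_zy;
     rewrite -/(rowsum W1 z) -/(rowsum W2 z) A1.2.1 A2.2.1.
have ne_y'y : y' != y by apply: contraTneq lt_zy' => ->; lia.
have Ezy : E z y by apply: contraTT lt_zy => /A2.1 ->.
have step := L_adj_shift A1 ne_y'y (leq_ltn_trans (leq0n _) lt_zy') Ezy cap_y.
have := min12 _ W2 (rt_step _ _ _ _ step) (rt_refl _ _ _).
by have := delta_shift lt_zy' lt_zy; lia.
Qed.

End Shift.

Theorem lemma3 (X : finType) (E : rel X) (alpha beta : X -> nat)
  (W1 W2 : mat X) (y : X) :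
  minimal_pair E alpha beta W1 W2 ->
  colsum W1 y < beta y ->
  forall x : X, W1 (x, y) = W2 (x, y).
Proof.
move=> min12 cap1 x.
have le21 := minimal_pair_column_le min12 cap1.
have cap2 : colsum W2 y < beta y.
  by apply: leq_ltn_trans cap1; apply: leq_sum => z _; apply: le21.
have le12 := minimal_pair_column_le (minimal_pair_sym min12) cap2.
by apply/eqP; rewrite eqn_leq le12 le21.
Qed.
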